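(* Let $X\subset\mathbf{P}^3$ be an integral surface over an algebraically closed field, let $P$ be a non-singular closed point of $X$, and let $C$ be an integral curve on $X$ passing through $P$ which is not contained in the tangent plane $T_{X,P}$ of $X$ at $P$. Then the multiplicity of $C$ at $P$ is at most half the degree of $C$. *)

From HB Require Import structures.
From mathcomp Require Import all_boot all_order all_algebra.
From mathcomp Require Import mpoly.

Set Implicit Arguments.
Unset Strict Implicit.
Unset Printing Implicit Defensive.

Import Order.TTheory GRing.Theory Num.Theory.
Local Open Scope ring_scope.

Section Defs.
Variable k : closedFieldType.

(* Points of k^4; a closed point of P^3 is represented by a nonzero vector. *)
Definition pt := 'I_4 -> k.
Definition nonzero_pt (x : pt) : Prop := exists i, x i != 0.

(* F is a homogeneous irreducible polynomial of degree d >= 1: X = V(F) is an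
   integral surface of P^3. *)
Definition homog_irreducible (F : {mpoly k[4]}) (d : nat) : Prop :=
  [/\ F != 0, F \is d.-homog, (0 < d)%N &
      forall p q : {mpoly k[4]}, F = p * q -> (msize p <= 1)%N \/ (msize q <= 1)%N].

(* P is a non-singular point of X = V(F) (Jacobian criterion). *)
Definition nonsingular_point (F : {mpoly k[4]}) (P : pt) : Prop :=
  F.@[P] = 0 /\ exists i, (mderiv i F).@[P] != 0.

Definition tangent_form (F : {mpoly k[4]}) (P : pt) : {mpoly k[4]} :=
  \sum_(i < 4) (mderiv i F).@[P] *: 'X_i.

(* A subset of P^3, given as its (punctured) affine cone in k^4. *)
Definition ideal_of (C : pt -> Prop) (p : {mpoly k[4]}) : Prop :=
  forall x, C x -> p.@[x] = 0.

Definition integral_closed_subset (C : pt -> Prop) : Prop :=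
  [/\ (forall x, C x -> nonzero_pt x),
      (forall x (c : k), C x -> c != 0 -> C (fun i => c * x i)),
      (forall x, nonzero_pt x -> (forall p, ideal_of C p -> p.@[x] = 0) -> C x),
      (exists x, C x) &
      (forall p q, ideal_of C (p * q) -> ideal_of C p \/ ideal_of C q)].

Definition indep_mod (J : {mpoly k[4]} -> Prop) (N : nat) (s : 'I_N -> {mpoly k[4]}) : Prop :=
  forall c : 'I_N -> k, J (\sum_(i < N) c i *: s i) -> forall i, c i = 0.

(* dim_k (S/I(C))_d = N, S = k[x0..x3] (value of the Hilbert function). *)
Definition hilb_dim (C : pt -> Prop) (d N : nat) : Prop :=
  (exists s : 'I_N -> {mpoly k[4]}, (forall i, s i \is d.-homog) /\ indep_mod (ideal_of C) s) /\
  (forall s : 'I_N.+1 -> {mpoly k[4]}, (forall i, s i \is d.-homog) -> ~ indep_mod (ideal_of C) s).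

(* C is a curve (its Hilbert polynomial has degree 1) of degree e
   (leading coefficient of the Hilbert polynomial). *)
Definition curve_of_degree (C : pt -> Prop) (e : nat) : Prop :=
  (0 < e)%N /\ exists (c : int) (d0 : nat), forall d, (d0 <= d)%N ->
    exists N, hilb_dim C d N /\ (N%:Z = e%:Z * d%:Z + c)%R.

(* r lies in m_P^n, m_P the maximal ideal of the point P of k^4: all Taylor
   coefficients of r at P of order < n vanish. *)
Definition vanish_to_order (P : pt) (n : nat) (r : {mpoly k[4]}) : Prop :=
  forall m : 'X_{1..4}, (mdeg m < n)%N ->
    (r \mPo [tuple 'X_i + (P i)%:MP | i < 4])@_m = 0.

(* The ideal I(C) + (l - 1) + m_P^n of k[x0..x3]; its quotient is
   O_{C,P} / m^n, computed in the affine chart {l = 1} of P^3. *)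
Definition local_ideal (C : pt -> Prop) (P : pt) (l : {mpoly k[4]}) (n : nat)
  (p : {mpoly k[4]}) : Prop :=
  exists a b r, [/\ ideal_of C a, vanish_to_order P n r & p = a + b * (l - 1) + r].

Definition quot_dim (J : {mpoly k[4]} -> Prop) (N : nat) : Prop :=
  (exists s : 'I_N -> {mpoly k[4]}, indep_mod J s) /\
  (forall s : 'I_N.+1 -> {mpoly k[4]}, ~ indep_mod J s).

(* The (Hilbert-Samuel) multiplicity of the curve C at P is m:
   length(O_{C,P}/m^n) = m n + c for n large. *)
Definition curve_mult (C : pt -> Prop) (P : pt) (m : nat) : Prop :=
  exists l : {mpoly k[4]}, [/\ l \is 1.-homog, l.@[P] = 1 &
    exists (c : int) (n0 : nat), forall n, (n0 <= n)%N ->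
      exists N, quot_dim (local_ideal C P l n) N /\ (N%:Z = m%:Z * n%:Z + c)%R].

End Defs.

(* Let T be the tangent form of F at P.  By Euler's identity and Taylor's
   formula T = F + r with r in m_P^2, so T^j lies in I(C) + m_P^(2j).  Since
   I(C) is prime and T is not in I(C), multiplication by T^j embeds
   (S/I(C))_(d-j) into (S/I(C))_d.  Dehomogenizing with a linear form l,
   every class of O_(C,P)/m^(2j) is represented by a d-form once 2j <= d + 1,
   and these d-forms stay independent of the image of T^j because that image
   dies in O_(C,P)/m^(2j).  Hence e (d - j) + 2 m j <= e d + O(1) for all
   large j, that is 2 m <= e. *)

From mathcomp Require Import all_boot all_order all_algebra.
From mathcomp Require Import mpoly.
From mathcomp Require Import zify ring.

Set Implicit Arguments.
Unset Strict Implicit.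
Unset Printing Implicit Defensive.
Import Order.TTheory GRing.Theory Num.Theory.
Local Open Scope ring_scope.

Section Divides.
Variable R : comRingType.
Implicit Types x y z : R.

Definition rdivides x y := exists c, y = c * x.

Lemma rdivides0 x : rdivides x 0.
Proof. by exists 0; rewrite mul0r. Qed.

Lemma rdividesD x y z : rdivides x y -> rdivides x z -> rdivides x (y + z).
Proof. by move=> [c ->] [c' ->]; exists (c + c'); rewrite mulrDl. Qed.

Lemma rdividesMl x y z : rdivides x y -> rdivides x (z * y).
Proof. by move=> [c ->]; exists (z * c); rewrite mulrA. Qed.

Lemma rdivides_subXX x y z j : rdivides x (y - z) -> rdivides x (y ^+ j - z ^+ j).
Proof. by rewrite subrXX mulrC; apply: rdividesMl. Qed.

Lemma rdivides_subM x y1 y2 z1 z2 :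
  rdivides x (y1 - z1) -> rdivides x (y2 - z2) -> rdivides x (y1 * y2 - z1 * z2).
Proof.
have -> : y1 * y2 - z1 * z2 = y2 * (y1 - z1) + z1 * (y2 - z2) by ring.
by move=> h1 h2; apply: rdividesD; apply: rdividesMl.
Qed.

Lemma rdivides_sub_prod x (I : Type) (r : seq I) (F G : I -> R) :
  (forall i, rdivides x (F i - G i)) ->
  rdivides x (\prod_(i <- r) F i - \prod_(i <- r) G i).
Proof.
move=> hFG; apply: (big_ind2 (fun y z => rdivides x (y - z))) => //.
- by rewrite subrr; apply: rdivides0.
- by move=> *; apply: rdivides_subM.
Qed.

End Divides.

Section MPolyTranslation.
Variables (n : nat) (R : comRingType).
Implicit Types (p q g h : {mpoly R[n]}) (a b : 'I_n -> R).

Definition mtranslate a : n.-tuple {mpoly R[n]} := [tuple 'X_i + (a i)%:MP | i < n].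

Lemma comp_mpolyA p (s t : n.-tuple {mpoly R[n]}) :
  (p \mPo s) \mPo t = p \mPo [tuple tnth s i \mPo t | i < n].
Proof.
elim/mpolyind: p => [|c m p _ _ IH]; first by rewrite !comp_mpoly0.
rewrite !comp_mpolyD !comp_mpolyZ IH !comp_mpolyX rmorph_prod /=.
by congr (_ *: _ + _); apply: eq_bigr => i _; rewrite rmorphXn tnth_mktuple.
Qed.

Lemma comp_mtranslateK a b p :
  (forall i, a i + b i = 0) -> (p \mPo mtranslate a) \mPo mtranslate b = p.
Proof.
move=> hab; rewrite comp_mpolyA -[RHS]comp_mpoly_id; congr (p \mPo _).
apply: eq_from_tnth => i; rewrite !tnth_mktuple comp_mpolyD comp_mpolyC.
by rewrite comp_mpolyXU -tnth_nth tnth_mktuple -addrA -mpolyCD [b i + _]addrC hab addr0.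
Qed.

Definition vanish_at0 N g := forall m : 'X_{1..n}, (mdeg m < N)%N -> g@_m = 0.

(* Generalizes [vanish_to_order] (p in m_a^N) to any n and coefficient ring. *)
Definition vanish_at a N p := vanish_at0 N (p \mPo mtranslate a).

Lemma vanish_at0D N g h : vanish_at0 N g -> vanish_at0 N h -> vanish_at0 N (g + h).
Proof. by move=> hg hh m hm; rewrite mcoeffD hg ?hh ?addr0. Qed.

Lemma vanish_at0Z N c g : vanish_at0 N g -> vanish_at0 N (c *: g).
Proof. by move=> hg m hm; rewrite mcoeffZ hg ?mulr0. Qed.

Lemma vanish_at0M N1 N2 g h :
  vanish_at0 N1 g -> vanish_at0 N2 h -> vanish_at0 (N1 + N2) (g * h).
Proof.
move=> hg hh m hm; rewrite mpolyME raddf_sum /= big1 // => mm _.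
rewrite mcoeffZ mcoeffX; case: eqP => [e|_]; last by rewrite mulr0.
move: hm; rewrite -e mdegD => hm.
have [lt1|ge1] := ltnP (mdeg mm.1) N1; first by rewrite hg ?mul0r.
by rewrite hh ?mulr0 ?mul0r //; lia.
Qed.

Lemma vanish_atD a N p q : vanish_at a N p -> vanish_at a N q -> vanish_at a N (p + q).
Proof. by rewrite /vanish_at comp_mpolyD; apply: vanish_at0D. Qed.

Lemma vanish_atZ a N c p : vanish_at a N p -> vanish_at a N (c *: p).
Proof. by rewrite /vanish_at comp_mpolyZ; apply: vanish_at0Z. Qed.

Lemma vanish_atN a N p : vanish_at a N p -> vanish_at a N (- p).
Proof. by rewrite -scaleN1r; apply: vanish_atZ. Qed.

Lemma vanish_at_0 a N : vanish_at a N 0.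
Proof. by rewrite /vanish_at comp_mpoly0 => m _; rewrite mcoeff0. Qed.

Lemma vanish_atM a N1 N2 p q :
  vanish_at a N1 p -> vanish_at a N2 q -> vanish_at a (N1 + N2) (p * q).
Proof. by rewrite /vanish_at rmorphM /=; apply: vanish_at0M. Qed.

Lemma vanish_atMr a N p q : vanish_at a N p -> vanish_at a N (p * q).
Proof. by move=> hp; rewrite -[N]addn0; apply: vanish_atM. Qed.

Lemma vanish_atX a N p j : vanish_at a N p -> vanish_at a (N * j) (p ^+ j).
Proof.
move=> hp; elim: j => [|j IH]; first by rewrite muln0 => m.
by rewrite exprS mulnS; apply: vanish_atM.
Qed.

Lemma vanish_at_subX a i : vanish_at a 1 ('X_i - (a i)%:MP).
Proof.
rewrite /vanish_at comp_mpolyB comp_mpolyC comp_mpolyXU -tnth_nth tnth_mktuple addrK.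
by move=> m; rewrite ltnS leqn0 mdeg_eq0 => /eqP ->; rewrite mcoeffX mnm1_eq0.
Qed.

End MPolyTranslation.

Section MPolyDifferential.
Variables (n : nat) (R : comRingType).
Implicit Types (p q : {mpoly R[n]}) (a : 'I_n -> R).

Definition mdiff_at a p := \sum_(i < n) (p^`M(i)).@[a] *: ('X_i - (a i)%:MP).

Lemma mdiff_atD a p q : mdiff_at a (p + q) = mdiff_at a p + mdiff_at a q.
Proof.
by rewrite /mdiff_at -big_split; apply: eq_bigr => i _; rewrite mderivD mevalD scalerDl.
Qed.

Lemma mdiff_atM a p q :
  mdiff_at a (p * q) = q.@[a] *: mdiff_at a p + p.@[a] *: mdiff_at a q.
Proof.
rewrite /mdiff_at !scaler_sumr -big_split; apply: eq_bigr => i _.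
by rewrite mderivM mevalD !mevalM scalerDl !scalerA [_ * q.@[a]]mulrC.
Qed.

Lemma mdiff_atC a c : mdiff_at a c%:MP = 0.
Proof. by rewrite /mdiff_at big1 // => i _; rewrite mderivC meval0 scale0r. Qed.

Lemma mdiff_atX a j : mdiff_at a 'X_j = 'X_j - (a j)%:MP.
Proof.
rewrite /mdiff_at (bigD1 j) //= big1 => [|i /negbTE ji].
  rewrite mderivX mnm1E eqxx -{1}[U_(j)%MM]add0m addmK.
  by rewrite mpolyX0 scale1r meval1 scale1r addr0.
by rewrite mderivX mnm1E eq_sym ji scale0r meval0 scale0r.
Qed.

Lemma vanish_at_mdiff a p : vanish_at a 1 (mdiff_at a p).
Proof.
apply: (big_ind (vanish_at a 1)); [exact: vanish_at_0 | exact: vanish_atD |].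
by move=> i _; apply/vanish_atZ/vanish_at_subX.
Qed.

Lemma vanish_at_taylor1 a p : vanish_at a 2 (p - (p.@[a])%:MP - mdiff_at a p).
Proof.
(* The p whose remainder lies in m_a^2 form a subring containing 'X_j and the
   constants. *)
pose e x := x - (x.@[a])%:MP - mdiff_at a x.
pose G x := vanish_at a 2 (e x).
have GC c : G c%:MP by rewrite /G /e mevalC mdiff_atC !subrr; apply: vanish_at_0.
have GX j : G 'X_j by rewrite /G /e mdiff_atX mevalXU subrr; apply: vanish_at_0.
have GD x y : G x -> G y -> G (x + y).
  rewrite /G (_ : e (x + y) = e x + e y); first exact: vanish_atD.
  by rewrite /e mdiff_atD mevalD mpolyCD; ring.
have GM x y : G x -> G y -> G (x * y).
  rewrite /G (_ : e (x * y) = mdiff_at a x * mdiff_at a y + x * e y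
                             + e x * ((y.@[a])%:MP + mdiff_at a y)); last first.
    by rewrite /e mdiff_atM mevalM mpolyCM -!mul_mpolyC; ring.
  move=> hx hy; apply: vanish_atD; first apply: vanish_atD.
  - exact: (vanish_atM (vanish_at_mdiff a x) (vanish_at_mdiff a y)).
  - by rewrite mulrC; apply: vanish_atMr.
  - exact: vanish_atMr.
have GXm (m : 'X_{1..n}) : G 'X_[m].
  rewrite mpolyXE_id; apply: (big_ind G) => [||i _]; [by rewrite -mpolyC1 | exact: GM |].
  by elim: (m i) => [|t IHt]; [rewrite expr0 -mpolyC1 | rewrite exprS; apply: GM].
elim/mpolyind: p => [|c m p _ _ IH]; first exact: (GC 0).
by apply: GD => //; rewrite -mul_mpolyC; apply: GM.
Qed.

Lemma euler_mpolyX (m : 'X_{1..n}) :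
  \sum_(i < n) 'X_i * ('X_[m] : {mpoly R[n]})^`M(i) = (mdeg m)%:R *: 'X_[m].
Proof.
rewrite mdegE natr_sum scaler_suml; apply: eq_bigr => i _.
rewrite mderivX -scalerAr; have [->|mi_gt0] := posnP (m i); first by rewrite !scale0r.
congr (_ *: _); rewrite -mpolyXD; congr 'X_[_]; apply/mnmP => j.
rewrite mnmDE mnmBE mnm1E; case: eqP => [<-|]; last by rewrite subn0.
by rewrite add1n subn1 prednK.
Qed.

Lemma euler_homog p d : p \is d.-homog -> \sum_(i < n) 'X_i * p^`M(i) = d%:R *: p.
Proof.
move=> hp; rewrite {1 2}(mpolyE p) scaler_sumr.
under eq_bigr => i _ do rewrite raddf_sum mulr_sumr.
rewrite exchange_big /=; apply: eq_big_seq => m hm.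
under eq_bigr => i _ do rewrite mderivZ -scalerAr.
by rewrite -scaler_sumr euler_mpolyX (dhomog_mf hp hm) !scalerA mulrC.
Qed.

Lemma euler_homog_eval p d a :
  p \is d.-homog -> \sum_(i < n) a i * (p^`M(i)).@[a] = d%:R * p.@[a].
Proof.
move=> /euler_homog /(congr1 (meval a)); rewrite mevalZ raddf_sum /= => <-.
by apply: eq_bigr => i _; rewrite mevalM mevalXU.
Qed.

End MPolyDifferential.

Section Homogenization.
Variables (n : nat) (R : comRingType).
Implicit Types (q l : {mpoly R[n]}) (a : 'I_n -> R).

Lemma comp_mpolyX_homog (m : 'X_{1..n}) (s : n.-tuple {mpoly R[n]}) :
  (forall i, tnth s i \is 1.-homog) -> 'X_[m] \mPo s \is (mdeg m).-homog.
Proof.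
move=> hs; rewrite comp_mpolyX mdegE.
apply: (big_ind2 (fun (p : {mpoly R[n]}) (d : nat) => p \is d.-homog)).
- exact: dhomog1.
- by move=> p1 d1 p2 d2; apply: dhomogM.
- by move=> i _; have := dhomogMn (m i) (hs i); rewrite mul1n.
Qed.

Lemma comp_mpolyX_homogenize_mod l a d (m : 'X_{1..n}) :
  rdivides (l - 1) (('X_[m] \mPo mtranslate a)
    - ('X_[m] \mPo [tuple 'X_i + a i *: l | i < n]) * l ^+ (d - mdeg m)).
Proof.
set X := 'X_[m] \mPo _; set Y := 'X_[m] \mPo _; set e := (d - mdeg m)%N.
have -> : X - Y * l ^+ e = (X - Y) + Y * (1 - l ^+ e) by ring.
apply: rdividesD; last first.
  by apply: rdividesMl; exists (- \sum_(i < e) l ^+ i); rewrite -opprB subrX1 mulrC mulNr.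
rewrite /X /Y !comp_mpolyX; apply: rdivides_sub_prod => i; apply: rdivides_subXX.
by rewrite !tnth_mktuple; exists (- (a i)%:MP); rewrite -mul_mpolyC; ring.
Qed.

(* Expand q in powers of X - a, drop the terms of degree >= N (they vanish to
   order N at a) and homogenize the others to degree d with l = 1 mod (l - 1). *)
Lemma homogenize_mod a l q N d : l \is 1.-homog -> (N <= d.+1)%N ->
  exists u b r, [/\ u \is d.-homog, vanish_at a N r & q = u + b * (l - 1) + r].
Proof.
move=> hl hNd; pose na i := - a i.
pose g := q \mPo mtranslate a.
pose low := \sum_(m <- msupp g | (mdeg m < N)%N) g@_m *: 'X_[m].
pose high := \sum_(m <- msupp g | ~~ (mdeg m < N)%N) g@_m *: 'X_[m].
pose th := [tuple 'X_i + na i *: l | i < n].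
pose u := \sum_(m <- msupp g | (mdeg m < N)%N)
            g@_m *: (('X_[m] \mPo th) * l ^+ (d - mdeg m)).
have [b hb] : rdivides (l - 1) ((low \mPo mtranslate na) - u).
  rewrite raddf_sum /= -sumrB; apply: big_ind => [|x y|m _]; first exact: rdivides0.
    exact: rdividesD.
  rewrite comp_mpolyZ -scalerBr -mul_mpolyC; apply: rdividesMl.
  exact: comp_mpolyX_homogenize_mod.
have hq : q = (low \mPo mtranslate na) + (high \mPo mtranslate na).
  have g_split : g = low + high by rewrite {1}(mpolyE g) (bigID (fun m => (mdeg m < N)%N)).
  by rewrite -raddfD /= -g_split comp_mtranslateK // => i; rewrite subrr.
exists u, b, (high \mPo mtranslate na); split.
- apply: rpred_sum => m hm; apply: dhomogZ.
  have th_homog i : tnth th i \is 1.-homog.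
    rewrite tnth_mktuple; apply: dhomogD; last exact: dhomogZ.
    by rewrite dhomogX; apply/eqP; exact: mdeg1.
  have := dhomogM (comp_mpolyX_homog m th_homog) (dhomogMn (d - mdeg m) hl).
  by rewrite mul1n subnKC //; lia.
- rewrite /vanish_at comp_mtranslateK => [m hm|i]; last by rewrite addNr.
  rewrite raddf_sum big1 // => m' hm' /=; rewrite mcoeffZ mcoeffX.
  by case: eqP => [em|_]; [move: hm'; rewrite em hm | rewrite mulr0].
- by rewrite {1}hq -hb; ring.
Qed.

End Homogenization.

Section IdealOfSubset.
Variables (k : closedFieldType) (C : pt k -> Prop).
Implicit Types (p q T g : {mpoly k[4]}).

Lemma ideal_of0 : ideal_of C 0.
Proof. by move=> x _; rewrite meval0. Qed.

Lemma ideal_ofD p q : ideal_of C p -> ideal_of C q -> ideal_of C (p + q).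
Proof. by move=> hp hq x Cx; rewrite mevalD hp ?hq ?addr0. Qed.

Lemma ideal_ofZ c p : ideal_of C p -> ideal_of C (c *: p).
Proof. by move=> hp x Cx; rewrite mevalZ hp ?mulr0. Qed.

Lemma ideal_ofMl p q : ideal_of C p -> ideal_of C (q * p).
Proof. by move=> hp x Cx; rewrite mevalM hp ?mulr0. Qed.

Lemma ideal_of_cancel_exp T g j : integral_closed_subset C ->
  ~ ideal_of C T -> ideal_of C (T ^+ j * g) -> ideal_of C g.
Proof.
move=> [_ _ _ _ prime_C] hT; elim: j => [|j IH]; first by rewrite expr0 mul1r.
by rewrite exprS -mulrA => /prime_C [].
Qed.

End IdealOfSubset.

Section LocalIdeal.
Variables (k : closedFieldType) (C : pt k -> Prop) (P : pt k) (l : {mpoly k[4]}) (N : nat).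
Implicit Types (p q : {mpoly k[4]}).
Local Notation J := (local_ideal C P l N).

Lemma local_idealD p q : J p -> J q -> J (p + q).
Proof.
move=> [a1 [b1 [r1 [h1 h2 ->]]]] [a2 [b2 [r2 [h3 h4 ->]]]].
exists (a1 + a2), (b1 + b2), (r1 + r2); split; [exact: ideal_ofD | exact: vanish_atD | ring].
Qed.

Lemma local_idealZ c p : J p -> J (c *: p).
Proof.
move=> [a [b [r [ha hr ->]]]]; exists (c *: a), (c *: b), (c *: r).
by split; [exact: ideal_ofZ | exact: vanish_atZ | rewrite !scalerDr scalerAl].
Qed.

Lemma local_ideal_of_ideal p : ideal_of C p -> J p.
Proof. by move=> hp; exists p, 0, 0; split; [|exact: vanish_at_0|rewrite mul0r !addr0]. Qed.

Lemma local_ideal_homogenize q d : l \is 1.-homog -> (N <= d.+1)%N ->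
  exists u, u \is d.-homog /\ J (q - u).
Proof.
move=> hl hNd; have [u [b [r [hu hr ->]]]] := homogenize_mod P q hl hNd.
exists u; split=> //; exists 0, b, r; split; [exact: ideal_of0 | exact: hr | ring].
Qed.

End LocalIdeal.

Section TangentPlane.
Variables (k : closedFieldType) (F : {mpoly k[4]}) (d : nat) (P : pt k).
Hypotheses (F_homog : F \is d.-homog) (FP0 : F.@[P] = 0).

Lemma tangent_form_homog : tangent_form F P \is 1.-homog.
Proof.
apply: rpred_sum => i _; apply: dhomogZ.
by rewrite dhomogX; apply/eqP; exact: mdeg1.
Qed.

Lemma mdiff_at_homog_root : mdiff_at P F = tangent_form F P.
Proof.
have PdF0 : \sum_(i < 4) (F^`M(i)).@[P] * P i = 0.
  transitivity (d%:R * F.@[P]); last by rewrite FP0 mulr0.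
  by rewrite -(euler_homog_eval P F_homog); apply: eq_bigr => i _; rewrite mulrC.
rewrite /mdiff_at /tangent_form.
under eq_bigr => i _ do rewrite scalerBr -[_ *: (P i)%:MP]mul_mpolyC -mpolyCM.
by rewrite sumrB -rmorph_sum /= PdF0 mpolyC0 subr0.
Qed.

Lemma vanish_at_tangent_form_sub : vanish_at P 2 (tangent_form F P - F).
Proof.
have := vanish_atN (vanish_at_taylor1 P F).
by rewrite FP0 mpolyC0 subr0 mdiff_at_homog_root opprB.
Qed.

Lemma local_ideal_tangent_formX C : ideal_of C F ->
  forall l j g, local_ideal C P l (2 * j) (tangent_form F P ^+ j * g).
Proof.
move=> CF l j g; set T := tangent_form F P; set r := T - F.
have [s eTr] : exists s, T ^+ j - r ^+ j = s * F.
  by exists (\sum_(i < j) T ^+ (j.-1 - i) * r ^+ i); rewrite subrXX /r opprB addrC subrK mulrC.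
exists (s * g * F), 0, (r ^+ j * g); split.
- exact: ideal_ofMl.
- by apply: vanish_atMr; apply: vanish_atX; apply: vanish_at_tangent_form_sub.
- by rewrite mul0r addr0 -[T ^+ j](subrK (r ^+ j)) eTr; ring.
Qed.

End TangentPlane.

Section IndependenceModulo.
Variable k : closedFieldType.
Local Notation S := {mpoly k[4]}.
Implicit Type J : S -> Prop.

Lemma indep_mod_widen J M N (s : 'I_M -> S) (le_NM : (N <= M)%N) :
  indep_mod J s -> indep_mod J (fun i => s (widen_ord le_NM i)).
Proof.
move=> hs c' hJ i.
pose c (j : 'I_M) := oapp c' 0 (insub (val j) : option 'I_N).
have cE (i' : 'I_N) : c (widen_ord le_NM i') = c' i' by rewrite /c /= valK.
rewrite -cE; apply: hs.
rewrite (bigID (fun j : 'I_M => (j < N)%N)) /= [X in _ + X]big1 ?addr0 => [|j /negbTE jN].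
  by rewrite (big_ord_narrow le_NM); under eq_bigr do rewrite cE.
by rewrite /c; case: insubP => [i' ji' _ | _] /=; [rewrite ji' in jN | rewrite scale0r].
Qed.

Lemma indep_mod_cat J a b (s : 'I_a -> S) (t : 'I_b -> S) :
  indep_mod J s ->
  (forall (c : 'I_a -> k) (c' : 'I_b -> k),
     J (\sum_(i < a) c i *: s i + \sum_(j < b) c' j *: t j) -> forall j, c' j = 0) ->
  indep_mod J (tnth [tuple of [tuple s i | i < a] ++ [tuple t j | j < b]]).
Proof.
move=> hs hst c; rewrite big_split_ord /=.
under eq_bigr do rewrite tnth_lshift tnth_mktuple.
under [X in _ + X]eq_bigr do rewrite tnth_rshift tnth_mktuple.
move=> hJ; have c'0 := hst (fun i => c (lshift b i)) (fun j => c (rshift a j)) hJ.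
have c0 : forall i, c (lshift b i) = 0.
  by apply: hs; move: hJ; rewrite [X in _ + X]big1 ?addr0 // => j _; rewrite c'0 scale0r.
by move=> i; case: (split_ordP i) => j ->; [apply: c0 | apply: c'0].
Qed.

Section Subspace.
Variable J : S -> Prop.
Hypotheses (J0 : J 0) (JD : forall p q, J p -> J q -> J (p + q))
  (JZ : forall c p, J p -> J (c *: p)).

Lemma indep_mod_congr N (s t : 'I_N -> S) :
  (forall i, J (s i - t i)) -> indep_mod J s -> indep_mod J t.
Proof.
move=> hst hs c hc; apply: hs.
have -> : \sum_(i < N) c i *: s i
          = \sum_(i < N) c i *: t i + \sum_(i < N) c i *: (s i - t i).
  by rewrite -big_split /=; apply: eq_bigr => i _; rewrite -scalerDr addrC subrK.
by apply: JD => //; apply: big_ind => // i _; apply: JZ.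
Qed.

End Subspace.

Lemma indep_mod_exp_mul C T j N (s : 'I_N -> S) : integral_closed_subset C ->
  ~ ideal_of C T -> indep_mod (ideal_of C) s ->
  indep_mod (ideal_of C) (fun i => T ^+ j * s i).
Proof.
move=> hC hT hs c hc; apply: hs; apply: (ideal_of_cancel_exp (j := j) hC hT).
by rewrite mulr_sumr; under eq_bigr do rewrite -scalerAr.
Qed.

Lemma hilb_dim_ge C d N M (s : 'I_M -> S) : hilb_dim C d N ->
  (forall i, s i \is d.-homog) -> indep_mod (ideal_of C) s -> (M <= N)%N.
Proof.
move=> [_ hmax] hs hi; rewrite leqNgt; apply/negP => ltNM.
exact: (hmax _ (fun i => hs _) (indep_mod_widen (le_NM := ltNM) hi)).
Qed.

End IndependenceModulo.

Lemma hilb_dim_add_quot_dim_le (k : closedFieldType) (C : pt k -> Prop) (P : pt k)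
    (l T : {mpoly k[4]}) j d N1 N2 N3 :
  integral_closed_subset C -> ~ ideal_of C T -> T \is 1.-homog -> l \is 1.-homog ->
  (j <= d)%N -> (2 * j <= d.+1)%N ->
  (forall g, local_ideal C P l (2 * j) (T ^+ j * g)) ->
  hilb_dim C d N1 -> hilb_dim C (d - j) N2 ->
  quot_dim (local_ideal C P l (2 * j)) N3 -> (N2 + N3 <= N1)%N.
Proof.
move=> hC hT T_homog l_homog le_jd le_2jd TJ hd1 [[s2 [s2_homog s2_indep]] _].
move=> [[s3 s3_indep] _].
set J := local_ideal C P l (2 * j).
have [u hu] : exists u : 'I_N3 -> {mpoly k[4]}, forall i, u i \is d.-homog /\ J (s3 i - u i).
  apply: (@fin_all_exists _ (fun _ => {mpoly k[4]})
            (fun i u => u \is d.-homog /\ J (s3 i - u))) => i.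
  exact: local_ideal_homogenize.
have u_indep : indep_mod J u.
  apply: (indep_mod_congr (J := J) _ _ _ (fun i => (hu i).2) s3_indep).
  - exact/local_ideal_of_ideal/ideal_of0.
  - exact: local_idealD.
  - exact: local_idealZ.
pose w := [tuple of [tuple T ^+ j * s2 i | i < N2] ++ [tuple u i | i < N3]].
apply: (hilb_dim_ge (s := tnth w) hd1) => [i|].
  case: (split_ordP i) => i' ->; rewrite ?tnth_lshift ?tnth_rshift tnth_mktuple.
    by have := dhomogM (dhomogMn j T_homog) (s2_homog i'); rewrite mul1n subnKC.
  exact: (hu i').1.
apply: indep_mod_cat; first exact: indep_mod_exp_mul.
move=> c c' /(local_ideal_of_ideal P l (2 * j)) hJ; apply: u_indep.
have -> : \sum_(i < N3) c' i *: u i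
          = (\sum_(i < N2) c i *: (T ^+ j * s2 i) + \sum_(i < N3) c' i *: u i)
            + T ^+ j * - \sum_(i < N2) c i *: s2 i.
  rewrite mulrN mulr_sumr -(eq_bigr _ (fun i _ => scalerAr (c i) (T ^+ j) (s2 i))).
  by rewrite addrC addKr.
exact: local_idealD.
Qed.

Theorem lemma5p7 (k : closedFieldType) (F : {mpoly k[4]}) (dF : nat)
  (P : 'I_4 -> k) (C : ('I_4 -> k) -> Prop) (e m : nat) :
  homog_irreducible F dF ->
  nonzero_pt P ->
  nonsingular_point F P ->
  integral_closed_subset C ->
  curve_of_degree C e ->
  (forall x, C x -> F.@[x] = 0%R) ->
  C P ->
  ~ (forall x, C x -> (tangent_form F P).@[x] = 0%R) ->
  curve_mult C P m ->
  (2 * m <= e)%N.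
Proof.
move=> [_ F_homog _ _] _ [FP0 _] hC [_ [c [d0 hilbC]]] CF _ hT
  [l [l_homog _ [c' [n0 multC]]]].
pose j := (n0 + `|c'| + 1)%N; pose d := (d0 + 2 * j)%N.
have [le_jd le_2jd] : (j <= d)%N /\ (2 * j <= d.+1)%N by rewrite /d; lia.
have [N1 [h1 e1]] := hilbC d (leq_addr _ _).
have [N2 [h2 e2]] := hilbC (d - j)%N ltac:(rewrite /d; lia).
have [N3 [h3 e3]] := multC (2 * j)%N ltac:(rewrite /j; lia).
have TJ := local_ideal_tangent_formX F_homog FP0 CF l j.
have := hilb_dim_add_quot_dim_le hC hT (tangent_form_homog F P) l_homog le_jd le_2jd TJ
  h1 h2 h3.
(* e (d - j) + c + (2 m j + c') <= e d + c with |c'| < j *)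
rewrite /d /j in e1 e2 e3 *; nia.
Qed.
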